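(* Let $1,2,3,4$ be four distinct vertices of $G$ such that $G[\{1,2,3\}]$ has edge set exactly $\{12,23\}$ and $G[\{2,3,4\}]$ has edge set exactly $\{23,34\}$ (nothing is assumed about whether $14$ is an edge). If $\Gamma_G$ is population monotonic, then $w_{23}\ge w_{12}+w_{34}$.
   Context: $G=(V,E;w)$ is a finite simple graph with edge weights $w:E\to\mathbb{R}$, $w_e>0$ for all $e\in E$; $w_{ij}$ denotes the weight of edge $ij$. The matching game on $G$ is the cooperative game $\Gamma_G=(N,\gamma)$ with player set $N=V$ and, for $S\subseteq N$, $\gamma(S)$ equal to the maximum weight of a matching in the induced subgraph $G[S]$ (so $\gamma(\emptyset)=0$). A population monotonic allocation scheme (PMAS) is a family $(\boldsymbol{x}_S)_{\emptyset\neq S\subseteq N}$ with $\boldsymbol{x}_S=(x_{S,i})_{i\in S}\in\mathbb{R}^S$ such that (efficiency) $\sum_{i\in S}x_{S,i}=\gamma(S)$ for every nonempty $S\subseteq N$, and (monotonicity) $x_{S,i}\le x_{T,i}$ whenever $\emptyset\ne S\subseteq T\subseteq N$ and $i\in S$. $\Gamma_G$ is called population monotonic if it admits a PMAS. *)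

From mathcomp Require Import all_boot all_order all_algebra.
Set Implicit Arguments. Unset Strict Implicit. Unset Printing Implicit Defensive.
Import Order.TTheory GRing.Theory Num.Theory.
Local Open Scope ring_scope.

Section Matching.
Variables (R : realFieldType) (T : finType) (e : rel T) (w : T -> T -> R).

Definition simple_graph := symmetric e /\ irreflexive e.
Definition pos_weights := (forall u v, w u v = w v u) /\ (forall u v, e u v -> 0 < w u v).

(* An edge is stored as an ordered pair (u,v) with enum_rank u < enum_rank v,
   so each undirected edge has exactly one representation. *)
Definition oriented_edge (p : T * T) : bool :=
  e p.1 p.2 && (enum_rank p.1 < enum_rank p.2)%N.

Definition is_matching (S : {set T}) (M : {set T * T}) : bool :=
  [forall p in M, oriented_edge p && (p.1 \in S) && (p.2 \in S)] &&
  [forall p in M, forall q in M, (p != q) ==>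
     [&& p.1 != q.1, p.1 != q.2, p.2 != q.1 & p.2 != q.2]].

Definition matching_weight (M : {set T * T}) : R := \sum_(p in M) w p.1 p.2.

Definition gamma (S : {set T}) : R :=
  \big[Order.max/0]_(M : {set T * T} | is_matching S M) matching_weight M.

(* population monotonic allocation scheme: x S i is x_{S,i} (only used for i in S) *)
Definition is_PMAS (x : {set T} -> T -> R) : Prop :=
  (forall S : {set T}, S != set0 -> \sum_(i in S) x S i = gamma S) /\
  (forall S U : {set T}, S != set0 -> S \subset U -> forall i, i \in S -> x S i <= x U i).

Definition population_monotonic : Prop := exists x, is_PMAS x.

End Matching.

From mathcomp Require Import all_boot all_order all_algebra.
From mathcomp Require Import lra.
Import Order.TTheory GRing.Theory Num.Theory.
Local Open Scope ring_scope.
Set Implicit Arguments. Unset Strict Implicit.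

(* Let x be a PMAS of the matching game.  The proof has a game-theoretic
   half and a graph-theoretic half.
   - Efficiency and monotonicity of x alone give, for vertices a,b,c,d with
     a,b,c distinct and b,c,d distinct,
       gamma{a,b} + gamma{b,c} + gamma{c,d} <= gamma{a,b,c} + gamma{b,c,d}
     ([pmas_chain]): in {a,b,c} the shares of a and b dominate their shares
     in {a,b} and the share of c dominates its share in {b,c}; symmetrically
     for {b,c,d}.
   - In the matching game gamma{u,v} >= w_uv for every edge uv
     ([gamma_edge]); and if ab is an edge but ac is not, every edge of
     G[{a,b,c}] contains b, so a matching there has at most one edge and
     gamma{a,b,c} <= max(w_ab, w_bc) ([gamma_path]).
   For the path 1-2-3-4 this yields
     w12 + w23 + w34 <= max(w12,w23) + max(w23,w34),
   which for positive weights forces w23 >= w12 + w34 ([max_chain_ineq]). *)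

Section MatchingGame.
Variables (R : realFieldType) (T : finType) (e : rel T) (w : T -> T -> R).

Lemma gamma_ge (S : {set T}) (M : {set T * T}) :
  is_matching e S M -> matching_weight w M <= gamma e w S.
Proof. exact: le_bigmax_cond. Qed.

Section Graph.
Hypotheses (sg : simple_graph e) (pw : pos_weights e w).

(* A single edge uv is a matching of G[{u,v}], so gamma{u,v} >= w_uv. *)
Lemma gamma_edge (u v : T) : e u v -> w u v <= gamma e w [set u; v].
Proof.
have [esym eirr] := sg; have [wsym _] := pw.
move=> euv; have neq_rk : enum_rank u != enum_rank v.
  by rewrite (inj_eq enum_rank_inj); apply: contraTneq euv => ->; rewrite eirr.
pose p := if (enum_rank u < enum_rank v)%N then (u, v) else (v, u).
have p_edge : oriented_edge e p && (p.1 \in [set u; v]) && (p.2 \in [set u; v]).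
  rewrite /p /oriented_edge !inE; case: ltnP => h /=; rewrite ?eqxx ?orbT ?andbT.
    by rewrite euv h.
  by rewrite esym euv ltn_neqAle h eq_sym neq_rk.
have wp : w p.1 p.2 = w u v by rewrite /p; case: ltnP => _ //=; rewrite wsym.
have Mp : is_matching e [set u; v] [set p].
  apply/andP; split; first by apply/forall_inP => q; rewrite inE => /eqP ->.
  apply/forall_inP => q; rewrite inE => /eqP ->.
  by apply/forall_inP => r; rewrite inE => /eqP ->; rewrite eqxx.
by rewrite -wp; have := gamma_ge Mp; rewrite /matching_weight big_set1.
Qed.

Lemma matching_share_vertex (S : {set T}) (M : {set T * T}) (z : T) (p q : T * T) :
  is_matching e S M -> p \in M -> q \in M ->
  (p.1 == z) || (p.2 == z) -> (q.1 == z) || (q.2 == z) -> p = q.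
Proof.
case/andP=> _ /forall_inP disj pM qM pz qz; apply/eqP/negPn/negP => npq.
move: (disj p pM) => /forall_inP /(_ q qM); rewrite npq /=.
by case/orP: pz => /eqP ->; case/orP: qz => /eqP ->; rewrite eqxx ?andbF.
Qed.

Variables (a b c : T).
Hypotheses (eab : e a b) (nac : ~~ e a c).

(* Since ac is not an edge, an edge of G[{a,b,c}] is ab or bc: it contains
   b and its weight is at most max(w_ab, w_bc). *)
Lemma path_edge (p : T * T) :
  e p.1 p.2 -> p.1 \in [set a; b; c] -> p.2 \in [set a; b; c] ->
  ((p.1 == b) || (p.2 == b)) && (w p.1 p.2 <= Order.max (w a b) (w b c)).
Proof.
have [esym eirr] := sg; have [wsym _] := pw.
case: p => x y /= exy; rewrite !inE.
move=> /orP [/orP []|] /eqP ex /orP [/orP []|] /eqP ey; subst x y;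
  rewrite ?eqxx ?orbT ?le_max ?lexx ?orbT ?(wsym b a) ?(wsym c b) ?lexx ?orbT //.
all: by move: exy nac; rewrite ?eirr // ?(esym c a) => ->.
Qed.

(* A matching of G[{a,b,c}] has at most one edge (all edges contain b), and
   the empty matching weighs 0 <= w_ab. *)
Lemma gamma_path : gamma e w [set a; b; c] <= Order.max (w a b) (w b c).
Proof.
have [_ wpos] := pw.
apply: bigmax_le => [|M HM]; first by rewrite le_max (ltW (wpos _ _ eab)).
have edgeM p : p \in M -> ((p.1 == b) || (p.2 == b)) &&
                         (w p.1 p.2 <= Order.max (w a b) (w b c)).
  move: HM => /andP [/forall_inP inS _] /inS /andP [/andP [/andP [ep _]]].
  exact: path_edge.
have [->|[p pM]] := set_0Vmem M.
  by rewrite /matching_weight big_set0 le_max (ltW (wpos _ _ eab)).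
have -> : M = [set p].
  apply/setP => q; rewrite inE; apply/idP/eqP => [qM|->//].
  have /andP [qb _] := edgeM q qM; have /andP [pb _] := edgeM p pM.
  exact: matching_share_vertex HM qM pM qb pb.
by rewrite /matching_weight big_set1; case/andP: (edgeM p pM).
Qed.

End Graph.

Lemma sum_set2 (F : T -> R) (u v : T) :
  u != v -> \sum_(i in [set u; v]) F i = F u + F v.
Proof. by move=> uv; rewrite big_setU1 ?big_set1 // inE. Qed.

Lemma sum_set3 (F : T -> R) (u v t : T) : u != v -> u != t -> v != t ->
  \sum_(i in [set u; v; t]) F i = F u + F v + F t.
Proof.
move=> uv ut vt; rewrite setUC big_setU1 /= ?sum_set2 1?addrC //.
by rewrite !inE negb_or !(eq_sym t) ut vt.
Qed.

Lemma pmas_chain (x : {set T} -> T -> R) (a b c d : T) :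
  is_PMAS e w x -> a != b -> a != c -> b != c -> b != d -> c != d ->
  gamma e w [set a; b] + gamma e w [set b; c] + gamma e w [set c; d] <=
  gamma e w [set a; b; c] + gamma e w [set b; c; d].
Proof.
move=> [eff mono] ab ac bc bd cd.
have ne2 (u v : T) : [set u; v] != set0 :> {set T}.
  by apply/set0Pn; exists u; rewrite !inE eqxx.
have ne3 (u v t : T) : [set u; v; t] != set0 :> {set T}.
  by apply/set0Pn; exists u; rewrite !inE eqxx.
have sub_l (u v t : T) : [set u; v] \subset [set u; v; t] by apply: subsetUl.
have sub_r (u v t : T) : [set v; t] \subset [set u; v; t].
  by apply/subsetP => z; rewrite !inE; case/orP => ->; rewrite ?orbT.
have mono_left (u v t i : T) : i \in [set u; v] -> x [set u; v] i <= x [set u; v; t] i.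
  exact: mono _ _ (ne2 u v) (sub_l u v t) i.
have mono_right (u v t i : T) : i \in [set v; t] -> x [set v; t] i <= x [set u; v; t] i.
  exact: mono _ _ (ne2 v t) (sub_r u v t) i.
rewrite -!eff // !sum_set2 // !sum_set3 //.
have := mono_left a b c a; have := mono_left a b c b; have := mono_right a b c c.
have := mono_left b c d b; have := mono_right b c d c; have := mono_right b c d d.
rewrite !inE !eqxx ?orbT; lra.
Qed.

Lemma max_chain_ineq (p q r : R) : 0 < p -> 0 < q -> 0 < r ->
  p + q + r <= Order.max p q + Order.max q r -> p + r <= q.
Proof. by move=> p0 q0 r0; rewrite !maxEle; do 2 case: ifP => _; lra. Qed.

End MatchingGame.

Theorem mainTheorem2 (R : realFieldType) (T : finType) (e : rel T) (w : T -> T -> R)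
  (v1 v2 v3 v4 : T) :
  simple_graph e -> pos_weights e w ->
  uniq [:: v1; v2; v3; v4] ->
  e v1 v2 -> e v2 v3 -> ~~ e v1 v3 -> e v3 v4 -> ~~ e v2 v4 ->
  population_monotonic e w ->
  w v1 v2 + w v3 v4 <= w v2 v3.
Proof.
move=> sg pw uniq_v e12 e23 n13 e34 n24 [x pmas].
move: uniq_v; rewrite /= !inE !negb_or => /and4P [/and3P [d12 d13 _] /andP [d23 d24] d34 _].
have [_ wpos] := pw.
have chain := pmas_chain pmas d12 d13 d23 d24 d34.
have g123 := gamma_path sg pw e12 n13.
have g234 := gamma_path sg pw e23 n24.
have := gamma_edge sg pw e12; have := gamma_edge sg pw e23.
have := gamma_edge sg pw e34 => g34 g23 g12.
apply: max_chain_ineq (wpos _ _ e12) (wpos _ _ e23) (wpos _ _ e34) _.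
by apply: le_trans (le_trans _ chain) (lerD g123 g234); rewrite !lerD.
Qed.
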